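(* In the setting described in the context, let $\varepsilon\in(0,1)$, $\Omega_n=((1-\varepsilon)\Sigma_n+\varepsilon I)^{-1}$, $\mathbf c=\mathrm{vec}(\mathbf C^\top)$, and define the $n^2\times n^2$ matrix $$\widetilde\Omega_n=\frac1\varepsilon\mathbf I_{n^2}-\frac{1-\varepsilon}{\varepsilon}\mathbf T\big(\varepsilon\mathbf I_{2n+4}+(1-\varepsilon)\mathbf U^\top\mathbf T\big)^{-1}\mathbf U^\top.$$ Then $\Omega_n(\bar\psi_n)=\sum_{i,j}b_{ij}\Lambda_{x_i,y_j}$, where the coefficients $b_{ij}$ form a matrix $\mathbf B\in\mathbb{R}^{n\times n}$ satisfying $\mathbf b^\top:=[\mathrm{vec}(\mathbf B^\top)]^\top=\mathbf c^\top\widetilde\Omega_n$.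
   Context: $k,\ell$ bounded kernels on $\mathcal{X},\mathcal{Y}$ with feature maps $K_x,L_y$; $\mathcal{H}=\mathcal{H}_\mathcal{X}\otimes\mathcal{H}_\mathcal{Y}$ real separable tensor-product RKHS with feature map $\Lambda_{x,y}=K_x\otimes L_y$. Data $z_i=(x_i,a_i,y_i)$, $i\in[n]$; $[n]$ partitioned into folds $\mathcal{I}^1,\mathcal{I}^2$ of sizes $n_1,n_2$; $s(i)$ the fold containing $i$, $r(i)=3-s(i)$. For $r\in\{1,2\}$: $\pi^r_n:\mathcal{X}\to(0,1)$, $\theta^r_{n,a}(x)=\sum_j[\boldsymbol\beta^r_a(x)]_j\Lambda_{x,y_j}$ with $[\boldsymbol\beta^r_a(x)]_j=0$ if $j\notin\mathcal{I}^r$ or $a_j\ne a$; $w_i=\pi^{r(i)}_n(x_i)$. With $s=3-r$: $\psi^r_n=\frac1{n_s}\sum_{i\in\mathcal{I}^s}[\theta^r_{n,1}(x_i)-\theta^r_{n,0}(x_i)]$; $\phi^r_n(z)=(\frac{a}{\pi^r_n(x)}-\frac{1-a}{1-\pi^r_n(x)})(\Lambda_{x,y}-\theta^r_{n,a}(x))+\theta^r_{n,1}(x)-\theta^r_{n,0}(x)-\psi^r_n$; $\bar\psi_n=\frac12\sum_r(\psi^r_n+\frac1{n_s}\sum_{i\in\mathcal{I}^s}\phi^r_n(z_i))$; $\Sigma_n(h)=\frac12\sum_r\frac1{n_s}\sum_{i\in\mathcal{I}^s}\langle\phi^r_n(z_i),h\rangle_{\mathcal{H}}\phi^r_n(z_i)$.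 Matrices: $[\mathbf K]_{ij}=k(x_i,x_j)$, $[\mathbf L]_{ij}=\ell(y_i,y_j)$, $\mathbf G=\mathbf K\otimes\mathbf L$. $\mathbf C$: $[\mathbf C]_{ii}=\frac1{2n_{s(i)}}(\frac{a_i}{w_i}-\frac{1-a_i}{1-w_i})$, and for $j\ne i$, $[\mathbf C]_{ij}=\frac1{2n_{s(i)}}[(1-\frac{a_i}{w_i})[\boldsymbol\beta^{r(i)}_1(x_i)]_j+(\frac{1-a_i}{1-w_i}-1)[\boldsymbol\beta^{r(i)}_0(x_i)]_j]$. $\mathbf E$: $[\mathbf E]_{ii}=0$, and for $j\ne i$, $[\mathbf E]_{ij}=\frac1{2n_{s(i)}}([\boldsymbol\beta^{r(i)}_1(x_i)]_j-[\boldsymbol\beta^{r(i)}_0(x_i)]_j)$. For $s\in\{1,2\}$: $[\mathbf D^s]_{ij}=\mathbf 1\{i\in\mathcal{I}^s\}\sqrt{2n_s}[\mathbf C]_{ij}$, $[\mathbf V^s]_{ij}=\mathbf 1\{i\in\mathcal{I}^s\}\sqrt{2/n_s}[\mathbf E]_{ij}$, $\mathbf W^s=\mathbf D^s-n_s\mathbf V^s$; $\mathbf d^s,\mathbf v^s,\mathbf w^s$ their row-wise vectorizations $\mathrm{vec}(\mathbf M^\top)\in\mathbb{R}^{n^2}$; $\mathbf S^s=(\mathbf I_n\bullet\mathbf D^s)^\top$, where the $i$-th row of the face-splitting product $\mathbf A\bullet\mathbf B$ is $\mathbf A_{i,:}\otimes\mathbf B_{i,:}$. $\mathbf T=[\mathbf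 G\mathbf S^1,\mathbf G\mathbf S^2,\mathbf G\mathbf v^1,\mathbf G\mathbf v^2,\mathbf G\mathbf w^1,\mathbf G\mathbf w^2]$, $\mathbf U=[\mathbf S^1,\mathbf S^2,-\mathbf d^1,-\mathbf d^2,-\mathbf v^1,-\mathbf v^2]\in\mathbb{R}^{n^2\times(2n+4)}$. *)

From mathcomp Require Import all_boot all_order all_algebra.
Set Implicit Arguments. Unset Strict Implicit. Unset Printing Implicit Defensive.
Import Order.TTheory GRing.Theory Num.Theory.
Local Open Scope ring_scope.

(* decode an index of 'I_(m*n) into the pair (i,j) with p = i*n + j
   (inverse of mxvec_index; mxvec is the ROW-WISE vectorization vec(M^T)). *)
Definition unvec (m n : nat) (p : 'I_(m * n)) : 'I_m * 'I_n :=
  enum_val (cast_ord (esym (@mxvec_cast m n)) p).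

(* row-wise vectorization vec(M^T), as a column vector in R^{m n} *)
Definition vecr (R : Type) (m n : nat) (M : 'M[R]_(m, n)) : 'cV[R]_(m * n) :=
  (mxvec M)^T.

Definition kron (R : pzRingType) (m1 n1 m2 n2 : nat)
  (A : 'M[R]_(m1, n1)) (B : 'M[R]_(m2, n2)) : 'M[R]_(m1 * m2, n1 * n2) :=
  \matrix_(p, q) (A (unvec p).1 (unvec q).1 * B (unvec p).2 (unvec q).2).

Definition facesplit (R : pzRingType) (m n1 n2 : nat)
  (A : 'M[R]_(m, n1)) (B : 'M[R]_(m, n2)) : 'M[R]_(m, n1 * n2) :=
  \matrix_(i, q) (A i (unvec q).1 * B i (unvec q).2).

(* Folds are indexed by 'I_2: fold 0 = I^1, fold 1 = I^2. *)
Record data (R : Type) (X Y : Type) (n : nat) := Data {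
  xs : 'I_n -> X;
  as_ : 'I_n -> bool;
  ys : 'I_n -> Y;
  fold : 'I_n -> 'I_2;
  pihat : 'I_2 -> X -> R;
  beta : 'I_2 -> bool -> X -> 'I_n -> R
}.

Definition oth (t : 'I_2) : 'I_2 := if t == ord0 then ord_max else ord0.


Definition nfold (R : Type) (X Y : Type) (n : nat) (D : data R X Y n) (t : 'I_2) : nat :=
  #|[set i | fold D i == t]|.

Definition rfold (R : Type) (X Y : Type) (n : nat) (D : data R X Y n) (i : 'I_n) : 'I_2 :=
  oth (fold D i).

Definition wi (R : Type) (X Y : Type) (n : nat) (D : data R X Y n) (i : 'I_n) : R :=
  pihat D (rfold D i) (xs D i).

Definition bR (R : pzRingType) (b : bool) : R := (b : nat)%:R.

Definition Cmx (R : fieldType) X Y n (D : data R X Y n) : 'M[R]_n :=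
  \matrix_(i, j)
    ((2 * (nfold D (fold D i))%:R)^-1 *
     (if i == j then bR R (as_ D i) / wi D i - (1 - bR R (as_ D i)) / (1 - wi D i)
      else (1 - bR R (as_ D i) / wi D i) * beta D (rfold D i) true (xs D i) j
         + ((1 - bR R (as_ D i)) / (1 - wi D i) - 1)
             * beta D (rfold D i) false (xs D i) j)).

Definition Emx (R : fieldType) X Y n (D : data R X Y n) : 'M[R]_n :=
  \matrix_(i, j)
    (if i == j then 0
     else (2 * (nfold D (fold D i))%:R)^-1 *
          (beta D (rfold D i) true (xs D i) j - beta D (rfold D i) false (xs D i) j)).

Definition Dmx (R : rcfType) X Y n (D : data R X Y n) (s : 'I_2) : 'M[R]_n :=
  \matrix_(i, j) (bR R (fold D i == s) * Num.sqrt (2 * (nfold D s)%:R) * Cmx D i j).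

Definition Vmx (R : rcfType) X Y n (D : data R X Y n) (s : 'I_2) : 'M[R]_n :=
  \matrix_(i, j) (bR R (fold D i == s) * Num.sqrt (2 / (nfold D s)%:R) * Emx D i j).

Definition Wmx (R : rcfType) X Y n (D : data R X Y n) (s : 'I_2) : 'M[R]_n :=
  Dmx D s - (nfold D s)%:R *: Vmx D s.

Definition Smx (R : rcfType) X Y n (D : data R X Y n) (s : 'I_2) : 'M[R]_(n * n, n) :=
  (facesplit 1%:M (Dmx D s))^T.

Definition Kmx (R : Type) X Y n (k : X -> X -> R) (D : data R X Y n) : 'M[R]_n :=
  \matrix_(i, j) k (xs D i) (xs D j).

Definition Lmx (R : Type) X Y n (l : Y -> Y -> R) (D : data R X Y n) : 'M[R]_n :=
  \matrix_(i, j) l (ys D i) (ys D j).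

Definition Gmx (R : pzRingType) X Y n (k : X -> X -> R) (l : Y -> Y -> R)
  (D : data R X Y n) : 'M[R]_(n * n) := kron (Kmx k D) (Lmx l D).

Definition s1 : 'I_2 := ord0.
Definition s2 : 'I_2 := ord_max.

Definition Tmx (R : rcfType) X Y n k l (D : data R X Y n)
  : 'M[R]_(n * n, n + (n + (1 + (1 + (1 + 1))))) :=
  let G := Gmx k l D in
  row_mx (G *m Smx D s1) (row_mx (G *m Smx D s2)
   (row_mx (G *m vecr (Vmx D s1)) (row_mx (G *m vecr (Vmx D s2))
    (row_mx (G *m vecr (Wmx D s1)) (G *m vecr (Wmx D s2)))))).

Definition Umx (R : rcfType) X Y n (D : data R X Y n)
  : 'M[R]_(n * n, n + (n + (1 + (1 + (1 + 1))))) :=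
  row_mx (Smx D s1) (row_mx (Smx D s2)
   (row_mx (- vecr (Dmx D s1)) (row_mx (- vecr (Dmx D s2))
    (row_mx (- vecr (Vmx D s1)) (- vecr (Vmx D s2)))))).

Definition Mid (R : rcfType) X Y n k l (D : data R X Y n) (eps : R) :=
  eps%:M + (1 - eps) *: ((Umx D)^T *m Tmx k l D).

Definition Omt (R : rcfType) X Y n k l (D : data R X Y n) (eps : R) : 'M[R]_(n * n) :=
  eps^-1 *: 1%:M
  - ((1 - eps) / eps) *: (Tmx k l D *m invmx (Mid k l D eps) *m (Umx D)^T).

Definition Bmx (R : rcfType) X Y n k l (D : data R X Y n) (eps : R) : 'M[R]_n :=
  vec_mx ((vecr (Cmx D))^T *m Omt k l D eps).

Definition theta (R : pzRingType) (V : lmodType R) X Y n (Lam : X -> Y -> V)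
  (D : data R X Y n) (r : 'I_2) (a : bool) (x : X) : V :=
  \sum_(j < n) beta D r a x j *: Lam x (ys D j).

Definition psir (R : fieldType) (V : lmodType R) X Y n (Lam : X -> Y -> V)
  (D : data R X Y n) (r : 'I_2) : V :=
  ((nfold D (oth r))%:R)^-1 *:
    \sum_(i < n | fold D i == oth r)
       (theta Lam D r true (xs D i) - theta Lam D r false (xs D i)).

Definition phir (R : fieldType) (V : lmodType R) X Y n (Lam : X -> Y -> V)
  (D : data R X Y n) (r : 'I_2) (x : X) (a : bool) (y : Y) : V :=
  (bR R a / pihat D r x - (1 - bR R a) / (1 - pihat D r x)) *: (Lam x y - theta Lam D r a x)
  + theta Lam D r true x - theta Lam D r false x - psir Lam D r.

Definition phiri (R : fieldType) (V : lmodType R) X Y n (Lam : X -> Y -> V)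
  (D : data R X Y n) (r : 'I_2) (i : 'I_n) : V :=
  phir Lam D r (xs D i) (as_ D i) (ys D i).

Definition psibar (R : fieldType) (V : lmodType R) X Y n (Lam : X -> Y -> V)
  (D : data R X Y n) : V :=
  2^-1 *: \sum_(r < 2)
    (psir Lam D r + ((nfold D (oth r))%:R)^-1 *:
        \sum_(i < n | fold D i == oth r) phiri Lam D r i).

Definition Sigman (R : fieldType) (V : lmodType R) X Y n (Lam : X -> Y -> V)
  (inner : V -> V -> R) (D : data R X Y n) (h : V) : V :=
  2^-1 *: \sum_(r < 2) (((nfold D (oth r))%:R)^-1 *:
    \sum_(i < n | fold D i == oth r) (inner (phiri Lam D r i) h *: phiri Lam D r i)).

(* The identity is linear algebra in coordinates.  Every vector involved is a
   combination featcomb b of the features Lambda_{x_p, y_q} with a coordinate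
   row b in R^(n*n), and <featcomb p, featcomb b> = (b G p^T) 0 0.  In these
   coordinates psibar_n is c = vec(C^T), and phi^{r(i)}_n(z_i) is
   sqrt(2 n_{s(i)}) g_i with g_i = row i (I_n . D^{s(i)}) - vec(V^{s(i)}), so
   Sigma_n acts by b |-> b G (sum_i g_i^T g_i) = b T U^T.  Hence
   (1 - eps) Sigma_n + eps I acts by right multiplication with
   eps I + (1 - eps) T U^T, whose inverse is Omega-tilde_n by the Woodbury
   identity, and Omega_n psibar_n = featcomb (c Omega-tilde_n). *)

From HB Require Import structures.
From mathcomp Require Import all_boot all_order all_algebra.
From mathcomp Require Import ring.
Import Order.TTheory GRing.Theory Num.Theory.
Set Implicit Arguments. Unset Strict Implicit. Unset Printing Implicit Defensive.
Local Open Scope ring_scope.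

Section Unvec.

Variables m n : nat.

Lemma mxvec_indexK (i : 'I_m) (j : 'I_n) : unvec (mxvec_index i j) = (i, j).
Proof. by rewrite /unvec /mxvec_index cast_ordK enum_rankK. Qed.

Lemma unvecK (a : 'I_(m * n)) : mxvec_index (unvec a).1 (unvec a).2 = a.
Proof. by rewrite /unvec /mxvec_index -surjective_pairing enum_valK cast_ordKV. Qed.

Lemma mxvecE_unvec (T : Type) (M : 'M[T]_(m, n)) z a :
  mxvec M z a = M (unvec a).1 (unvec a).2.
Proof. by rewrite ord1 -(mxvecE M) unvecK. Qed.

Lemma big_unvec (Z : nmodType) (F : 'I_m -> 'I_n -> Z) :
  \sum_(a < m * n) F (unvec a).1 (unvec a).2 = \sum_i \sum_j F i j.
Proof.
rewrite pair_bigA (reindex (fun p : 'I_m * 'I_n => mxvec_index p.1 p.2)) /=.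
  by apply: eq_bigr => -[i j] _; rewrite mxvec_indexK.
by exists (@unvec m n) => [[i j] _ | a _]; rewrite ?mxvec_indexK ?unvecK.
Qed.

End Unvec.

Section FeatureCombination.

Variables (R : pzRingType) (V : lmodType R) (X Y : Type) (Lam : X -> Y -> V).
Variables (n : nat) (x : 'I_n -> X) (y : 'I_n -> Y).

Definition featcomb (b : 'rV[R]_(n * n)) : V :=
  \sum_a b 0 a *: Lam (x (unvec a).1) (y (unvec a).2).

Fact featcomb_is_linear : linear featcomb.
Proof.
move=> c u v; rewrite /featcomb scaler_sumr -big_split.
by apply: eq_bigr => a _; rewrite !mxE scalerDl scalerA.
Qed.

HB.instance Definition _ :=
  GRing.isLinear.Build R 'rV[R]_(n * n) V _ featcomb featcomb_is_linear.

Lemma featcomb_mxvec (M : 'M[R]_n) :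
  featcomb (mxvec M) = \sum_i \sum_j M i j *: Lam (x i) (y j).
Proof.
rewrite /featcomb -(big_unvec (fun i j => M i j *: Lam (x i) (y j))).
by apply: eq_bigr => a _; rewrite mxvecE_unvec.
Qed.

Lemma featcomb_row (i : 'I_n) (f : 'I_n -> R) :
  \sum_q f q *: Lam (x i) (y q) =
  featcomb (mxvec (\matrix_(p, q) ((p == i)%:R * f q))).
Proof.
rewrite featcomb_mxvec [RHS](bigD1 i) //= [E in _ + E]big1 => [|p /negbTE pi].
  by rewrite addr0; apply: eq_bigr => q _; rewrite mxE eqxx mul1r.
by rewrite big1 // => q _; rewrite mxE pi mul0r scale0r.
Qed.

End FeatureCombination.

Section Gram.

Variables (R : comPzRingType) (V : lmodType R) (X Y : Type) (Lam : X -> Y -> V).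
Variables (k : X -> X -> R) (l : Y -> Y -> R) (inner : V -> V -> R).
Hypothesis inner_linear :
  forall (c : R) (u v w : V), inner (c *: u + v) w = c * inner u w + inner v w.
Hypothesis inner_sym : forall u v : V, inner u v = inner v u.
Hypothesis inner_Lam : forall x x' y y', inner (Lam x y) (Lam x' y') = k x x' * l y y'.

Lemma inner0l w : inner 0 w = 0.
Proof.
have := inner_linear 1 0 0 w.
by rewrite scaler0 addr0 mul1r -{1}[inner 0 w]addr0 => /addrI/esym.
Qed.

Lemma innerZl c u w : inner (c *: u) w = c * inner u w.
Proof. by rewrite -[c *: u]addr0 inner_linear inner0l addr0. Qed.

Lemma inner_suml I (r : seq I) (c : I -> R) (F : I -> V) w :
  inner (\sum_(i <- r) c i *: F i) w = \sum_(i <- r) c i * inner (F i) w.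
Proof.
elim: r => [|i r IH]; first by rewrite !big_nil inner0l.
by rewrite !big_cons inner_linear IH.
Qed.

Variables (n : nat) (x : 'I_n -> X) (y : 'I_n -> Y).

Local Notation G := (kron (\matrix_(i, j) k (x i) (x j)) (\matrix_(i, j) l (y i) (y j))).
Local Notation lc := (featcomb Lam x y).

Lemma inner_featcomb p b : inner (lc p) (lc b) = (b *m G *m p^T) 0 0.
Proof.
rewrite /featcomb inner_suml mxE; apply: eq_bigr => c _.
rewrite inner_sym inner_suml !mxE mulrC; congr (_ * _).
by apply: eq_bigr => a _; rewrite inner_Lam !mxE; ring.
Qed.

Lemma inner_featcomb_scale g b :
  inner (lc g) (lc b) *: lc g = lc (b *m G *m (g^T *m g)).
Proof.
by rewrite inner_featcomb -linearZ /= mulmxA {2}(mx11_scalar (_ *m _)) mul_scalar_mx.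
Qed.

End Gram.

Lemma oth_involutive : involutive oth.
Proof. by move=> t; apply/val_inj; case: t => [[|[|m]]]. Qed.

Lemma oth_neq (t : 'I_2) : oth t != t.
Proof. by case: t => [[|[|m]]]. Qed.

Lemma sumr_folds (Z : nmodType) (F : 'I_2 -> Z) : \sum_(s < 2) F s = F s1 + F s2.
Proof. by rewrite big_ord_recl big_ord1; congr (_ + F _); apply/val_inj. Qed.

Lemma sum_other_fold (Z : nmodType) n (f : 'I_n -> 'I_2) (F : 'I_2 -> 'I_n -> Z) :
  \sum_(r < 2) \sum_(i | f i == oth r) F r i = \sum_i F (oth (f i)) i.
Proof.
rewrite [RHS](partition_big f predT) //= (reindex_inj (can_inj oth_involutive)) /=.
apply: eq_bigr => r _; rewrite oth_involutive.
by apply: eq_bigr => i /eqP ->.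
Qed.

Section RowOuterProducts.

Variables (R : comPzRingType) (m N : nat).

Lemma trmx_mul_rows (F : 'M[R]_(m, N)) : F^T *m F = \sum_i (row i F)^T *m row i F.
Proof.
apply/matrixP => a b; rewrite !mxE summxE; apply: eq_bigr => i _.
by rewrite !mxE big_ord1 !mxE.
Qed.

Lemma sum_outer_row_sub (F : 'M[R]_(m, N)) (v : 'rV[R]_N) (P : pred 'I_m) :
  (forall i, ~~ P i -> row i F = 0) ->
  \sum_(i | P i) (row i F - v)^T *m (row i F - v) =
  F^T *m F - (\sum_i row i F)^T *m v - v^T *m (\sum_i row i F)
  + #|P|%:R *: (v^T *m v).
Proof.
move=> F0; have sumP (H : 'I_m -> 'M[R]_N) : (forall i, row i F = 0 -> H i = 0) ->
    \sum_(i | P i) H i = \sum_i H i.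
  move=> H0; rewrite [RHS](bigID P) /= [E in _ = _ + E]big1 ?addr0 //.
  by move=> i /F0 /H0.
rewrite (eq_bigr (fun i => (row i F)^T *m row i F - (row i F)^T *m v
    - v^T *m row i F + v^T *m v)); last first.
  by move=> i _; rewrite mulmxBr linearB /= !mulmxBl opprB addrA addrAC [_ - _ - _]addrAC.
rewrite big_split !sumrB /= sumr_const -scaler_nat.
rewrite !sumP => [|i ->|i ->|i ->]; rewrite ?linear0 ?mul0mx ?mulmx0 //.
by rewrite trmx_mul_rows -mulmx_suml -mulmx_sumr [(\sum_i _)^T]linear_sum.
Qed.

End RowOuterProducts.

Lemma woodbury_mulmx (R : fieldType) N p (T U : 'M[R]_(N, p)) (e a : R) :
  e != 0 -> e%:M + a *: (U^T *m T) \in unitmx ->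
  (e^-1 *: 1%:M - (a / e) *: (T *m invmx (e%:M + a *: (U^T *m T)) *m U^T))
    *m (e%:M + a *: (T *m U^T)) = 1%:M.
Proof.
move=> e0 Mu; set M := e%:M + a *: (U^T *m T).
have UM : U^T *m (e%:M + a *: (T *m U^T)) = M *m U^T.
  by rewrite mulmxDr mulmxDl mul_mx_scalar mul_scalar_mx -!scalemxAl -!scalemxAr mulmxA.
have TMU : T *m invmx M *m U^T *m (e%:M + a *: (T *m U^T)) = T *m U^T.
  by rewrite -mulmxA UM mulmxA -(mulmxA T) mulVmx // mulmx1.
rewrite mulmxBl -!scalemxAl TMU mul1mx scalerDr scale_scalar_mx mulVf //.
by rewrite scalerA (mulrC e^-1) addrK.
Qed.

Lemma sqrtr_mul_2m_2Vm (R : rcfType) (m : R) :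
  0 < m -> Num.sqrt (2 * m) * Num.sqrt (2 / m) = 2.
Proof.
move=> m0; rewrite -sqrtrM ?mulr_ge0 ?ltW //.
by rewrite mulrACA mulfV ?gt_eqF // mulr1 -expr2 sqrtr_sqr ger0_norm.
Qed.

Section CoefficientMatrices.

Variables (R : fieldType) (X Y : Type) (n : nat) (D : data R X Y n).

Definition phi_coef (i q : 'I_n) : R :=
  if i == q then bR R (as_ D i) / wi D i - (1 - bR R (as_ D i)) / (1 - wi D i)
  else (1 - bR R (as_ D i) / wi D i) * beta D (rfold D i) true (xs D i) q
     + ((1 - bR R (as_ D i)) / (1 - wi D i) - 1) * beta D (rfold D i) false (xs D i) q.

Definition phi_mx (i : 'I_n) : 'M[R]_n :=
  \matrix_(p, q) ((p == i)%:R * phi_coef i q).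

Definition psi_mx (r : 'I_2) : 'M[R]_n :=
  \matrix_(p, q) ((nfold D (oth r))%:R^-1 *
    (bR R (fold D p == oth r) * (beta D r true (xs D p) q - beta D r false (xs D p) q))).

Lemma Cmx_sum_phi_mx :
  Cmx D = \sum_i (2 * (nfold D (fold D i))%:R)^-1 *: phi_mx i.
Proof.
apply/matrixP => p q; rewrite summxE (bigD1 p) //= big1 => [|i /negbTE ip].
  by rewrite !mxE eqxx mul1r addr0.
by rewrite !mxE eq_sym ip mul0r mulr0.
Qed.

Lemma sum_fold_const (V : lmodType R) (t : 'I_2) (v : V) :
  \sum_(i | fold D i == t) v = (nfold D t)%:R *: v.
Proof. by rewrite sumr_const scaler_nat /nfold cardsE. Qed.

Variables (V : lmodType R) (Lam : X -> Y -> V).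
Hypothesis beta_supp : forall (r : 'I_2) (a : bool) (x : X) (j : 'I_n),
  (fold D j != r) || (as_ D j != a) -> beta D r a x j = 0.

Local Notation lc := (featcomb Lam (xs D) (ys D)).

Lemma phiri_add_psir (i : 'I_n) :
  phiri Lam D (rfold D i) i + psir Lam D (rfold D i) = lc (mxvec (phi_mx i)).
Proof.
rewrite /phiri /phir subrK -featcomb_row /theta.
have Lam_i : Lam (xs D i) (ys D i) = \sum_q (q == i)%:R *: Lam (xs D i) (ys D q).
  rewrite (bigD1 i) //= big1 ?addr0 ?eqxx ?scale1r // => q /negbTE ->.
  by rewrite scale0r.
have beta_ii a : beta D (rfold D i) a (xs D i) i = 0.
  by apply: beta_supp; rewrite /rfold eq_sym oth_neq.
rewrite Lam_i -sumrB scaler_sumr -big_split -sumrB /=; apply: eq_bigr => q _.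
rewrite -scalerBl scalerA -scalerDl -scalerBl; congr (_ *: _).
rewrite /phi_coef -/(wi D i) eq_sym; case: eqP => [<-|_].
  by rewrite !beta_ii /=; ring.
by case: (as_ D i); rewrite /bR /=; ring.
Qed.

Lemma psir_featcomb (r : 'I_2) : psir Lam D r = lc (mxvec (psi_mx r)).
Proof.
have row_i i : theta Lam D r true (xs D i) - theta Lam D r false (xs D i) =
    lc (mxvec (\matrix_(p, q) ((p == i)%:R *
      (beta D r true (xs D i) q - beta D r false (xs D i) q)))).
  by rewrite /theta -sumrB -featcomb_row; apply: eq_bigr => q _; rewrite scalerBl.
rewrite /psir (eq_bigr _ (fun i _ => row_i i)) -!linear_sum -!linearZ /=.
congr (lc (mxvec _)); apply/matrixP => p q; rewrite !mxE summxE; congr (_ * _).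
rewrite big_mkcond (bigD1 p) //= big1 => [|i /negbTE ip]; last first.
  by rewrite mxE [p == _]eq_sym ip mul0r; case: ifP.
by rewrite mxE eqxx mul1r addr0 /bR; case: ifP; rewrite /= ?mul1r ?mul0r.
Qed.

End CoefficientMatrices.

Section Aggregation.

Variables (R : numFieldType) (X Y : Type) (n : nat) (D : data R X Y n).
Variables (V : lmodType R) (Lam : X -> Y -> V).
Hypothesis beta_supp : forall (r : 'I_2) (a : bool) (x : X) (j : 'I_n),
  (fold D j != r) || (as_ D j != a) -> beta D r a x j = 0.
Hypothesis fold_nonempty : forall t : 'I_2, (0 < nfold D t)%N.

Local Notation lc := (featcomb Lam (xs D) (ys D)).

Lemma nfold_neq0 (t : 'I_2) : (nfold D t)%:R != 0 :> R.
Proof. by rewrite pnatr_eq0 -lt0n fold_nonempty. Qed.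

Lemma psibar_featcomb : psibar Lam D = lc (mxvec (Cmx D)).
Proof.
have fold_avg r : psir Lam D r + (nfold D (oth r))%:R^-1 *:
      \sum_(i | fold D i == oth r) phiri Lam D r i =
    (nfold D (oth r))%:R^-1 *: \sum_(i | fold D i == oth r) lc (mxvec (phi_mx D i)).
  have psir_avg : psir Lam D r = (nfold D (oth r))%:R^-1 *:
      \sum_(i | fold D i == oth r) psir Lam D r.
    by rewrite sum_fold_const scalerA mulVf ?nfold_neq0 ?scale1r.
  rewrite {1}psir_avg -scalerDr -big_split /=; congr (_ *: _).
  apply: eq_bigr => i /eqP fold_i; rewrite -(phiri_add_psir Lam beta_supp) addrC.
  by rewrite /rfold fold_i oth_involutive.
rewrite /psibar (eq_bigr _ (fun r _ => fold_avg r)) Cmx_sum_phi_mx !linear_sum /=.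
under eq_bigr => r _ do rewrite !scaler_sumr.
rewrite sum_other_fold; apply: eq_bigr => i _.
by rewrite oth_involutive !linearZ /= scalerA invfM mulrC.
Qed.

End Aggregation.

Lemma sum_row_facesplit1 (R : pzRingType) n (M : 'M[R]_n) :
  \sum_i row i (facesplit 1%:M M) = mxvec M.
Proof.
apply/matrixP => z a; rewrite summxE mxvecE_unvec (bigD1 (unvec a).1) //=.
rewrite big1 => [|i /negbTE ia]; last by rewrite !mxE ia mul0r.
by rewrite !mxE eqxx mul1r addr0.
Qed.

Section Covariance.

Variables (R : rcfType) (X Y : Type) (n : nat) (D : data R X Y n).
Hypothesis beta_supp : forall (r : 'I_2) (a : bool) (x : X) (j : 'I_n),
  (fold D j != r) || (as_ D j != a) -> beta D r a x j = 0.
Hypothesis fold_nonempty : forall t : 'I_2, (0 < nfold D t)%N.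

Local Notation rt s := (Num.sqrt (2 * (nfold D s)%:R)).

Lemma double_nfold_gt0 s : 0 < 2 * (nfold D s)%:R :> R.
Proof. by rewrite mulr_gt0 // ltr0n. Qed.

Lemma mxvec_phi_mx i :
  mxvec (phi_mx D i) = rt (fold D i) *: row i (facesplit 1%:M (Dmx D (fold D i))).
Proof.
apply/matrixP => z a; rewrite mxvecE_unvec !mxE; case: (unvec a) => p q /=.
rewrite -/(phi_coef D i q) [p == i]eq_sym /bR eqxx /= mul1r.
set t := rt _; set m := 2 * _.
have tt : t * t = m by rewrite -expr2 sqr_sqrtr ?ltW ?double_nfold_gt0.
transitivity (t * t / m * ((i == p)%:R * phi_coef D i q)); last by ring.
by rewrite tt mulfV ?mul1r // gt_eqF ?double_nfold_gt0.
Qed.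

Lemma psi_mx_oth s : psi_mx D (oth s) = rt s *: Vmx D s.
Proof.
apply/matrixP => p q; rewrite !mxE oth_involutive /rfold.
have [fold_p|/negbTE fold_p] := eqVneq (fold D p) s; last first.
  by rewrite /bR /= !mul0r !mulr0.
rewrite fold_p /bR /= !mul1r; case: eqP => [<-|_].
  by rewrite !beta_supp ?subrr ?mulr0 // fold_p eq_sym oth_neq.
rewrite !mulrA sqrtr_mul_2m_2Vm ?ltr0n // invfM mulrA.
by rewrite mulfV ?mul1r // pnatr_eq0.
Qed.

Definition phi_row (i : 'I_n) : 'rV[R]_(n * n) :=
  row i (facesplit 1%:M (Dmx D (fold D i))) - mxvec (Vmx D (fold D i)).

Lemma phiri_featcomb (V : lmodType R) (Lam : X -> Y -> V) i :
  phiri Lam D (rfold D i) i = featcomb Lam (xs D) (ys D) (rt (fold D i) *: phi_row i).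
Proof.
rewrite -[LHS](addrK (psir Lam D (rfold D i))) phiri_add_psir // psir_featcomb.
by rewrite mxvec_phi_mx /rfold psi_mx_oth -linearB /phi_row scalerBr linearZ.
Qed.

Lemma sum_phi_row_outer s :
  \sum_(i | fold D i == s) (phi_row i)^T *m phi_row i =
  Smx D s *m (Smx D s)^T - vecr (Dmx D s) *m (vecr (Vmx D s))^T
  - vecr (Vmx D s) *m (vecr (Dmx D s))^T
  + (nfold D s)%:R *: (vecr (Vmx D s) *m (vecr (Vmx D s))^T).
Proof.
have rows0 i : fold D i != s -> row i (facesplit 1%:M (Dmx D s)) = 0.
  move=> /negbTE fold_i; apply/rowP => a.
  by rewrite !mxE fold_i /bR /= !mul0r mulr0.
under eq_bigr => i /eqP fold_i do rewrite /phi_row fold_i.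
by rewrite sum_outer_row_sub // sum_row_facesplit1 /Smx /vecr !trmxK /nfold cardsE.
Qed.

Lemma Tmx_mul_trUmx (k : X -> X -> R) (l : Y -> Y -> R) :
  Tmx k l D *m (Umx D)^T = Gmx k l D *m \sum_i (phi_row i)^T *m phi_row i.
Proof.
rewrite (partition_big (fold D) predT) //= sumr_folds !sum_phi_row_outer.
rewrite /Tmx /Umx -!mul_mx_row -mulmxA; congr (_ *m _).
rewrite !tr_row_mx !mul_row_col /Wmx /vecr !linearB !linearN !linearZ /=.
rewrite !trmxK !scalerN !mulmxDl !mulNmx -!scalemxAl.
apply/matrixP => i j; rewrite !mxE; ring.
Qed.

End Covariance.

Section SampleCovariance.

Variables (R : rcfType) (X Y : Type) (n : nat) (D : data R X Y n).
Variables (V : lmodType R) (Lam : X -> Y -> V) (inner : V -> V -> R).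
Variables (k : X -> X -> R) (l : Y -> Y -> R).
Hypothesis inner_linear :
  forall (c : R) (u v w : V), inner (c *: u + v) w = c * inner u w + inner v w.
Hypothesis inner_sym : forall u v : V, inner u v = inner v u.
Hypothesis inner_Lam : forall x x' y y', inner (Lam x y) (Lam x' y') = k x x' * l y y'.
Hypothesis beta_supp : forall (r : 'I_2) (a : bool) (x : X) (j : 'I_n),
  (fold D j != r) || (as_ D j != a) -> beta D r a x j = 0.
Hypothesis fold_nonempty : forall t : 'I_2, (0 < nfold D t)%N.

Local Notation lc := (featcomb Lam (xs D) (ys D)).

Lemma Sigman_featcomb b :
  Sigman Lam inner D (lc b) = lc (b *m Tmx k l D *m (Umx D)^T).
Proof.
rewrite -mulmxA Tmx_mul_trUmx mulmxA mulmx_sumr linear_sum /= /Sigman.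
rewrite scaler_sumr; under [LHS]eq_bigr => r _ do rewrite !scaler_sumr.
rewrite sum_other_fold; apply: eq_bigr => i _; rewrite oth_involutive.
rewrite phiri_featcomb // [lc (_ *: _)]linearZ /= (innerZl inner_linear) !scalerA.
rewrite -(inner_featcomb_scale inner_linear inner_sym inner_Lam); congr (_ *: _).
set c := Num.sqrt _; set ip := inner _ _.
have cc : c * c = 2 * (nfold D (fold D i))%:R.
  by rewrite -expr2 sqr_sqrtr ?ltW ?double_nfold_gt0.
transitivity ((2 * (nfold D (fold D i))%:R)^-1 * (c * c) * ip); first by rewrite invfM; ring.
by rewrite cc mulVf ?mul1r // gt_eqF ?double_nfold_gt0.
Qed.

End SampleCovariance.

Unset Implicit Arguments.

Theorem lemmaH5
  (R : rcfType) (X Y : Type) (k : X -> X -> R) (l : Y -> Y -> R)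
  (V : lmodType R) (inner : V -> V -> R) (Lam : X -> Y -> V)
  (n : nat) (D : data R X Y n) (eps : R) (Omega : V -> V)
  (* bounded kernels *)
  (hk : exists M : R, forall x : X, k x x <= M)
  (hl : exists M : R, forall y : Y, l y y <= M)
  (* inner product of the real pre-Hilbert space H *)
  (hlin : forall (c : R) (u v w : V), inner (c *: u + v) w = c * inner u w + inner v w)
  (hsym : forall u v : V, inner u v = inner v u)
  (hpos : forall u : V, u != 0 -> 0 < inner u u)
  (* tensor-product feature map Lambda_{x,y} = K_x (x) L_y *)
  (hLam : forall x x' y y', inner (Lam x y) (Lam x' y') = k x x' * l y y')
  (* folds: a partition of [n] into two nonempty folds *)
  (hfold : forall t : 'I_2, (0 < nfold D t)%N)
  (* propensity estimates in (0,1) *)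
  (hpi : forall (r : 'I_2) (x : X), 0 < pihat D r x < 1)
  (* support of the coefficient vectors beta *)
  (hbeta : forall (r : 'I_2) (a : bool) (x : X) (j : 'I_n),
      (fold D j != r) || (as_ D j != a) -> beta D r a x j = 0)
  (heps : 0 < eps < 1)
  (* Omega_n = ((1 - eps) Sigma_n + eps I)^{-1} *)
  (hOmL : forall h : V, Omega ((1 - eps) *: Sigman Lam inner D h + eps *: h) = h)
  (hOmR : forall h : V, (1 - eps) *: Sigman Lam inner D (Omega h) + eps *: Omega h = h)
  (* the (2n+4) x (2n+4) matrix inverted in Omega-tilde is invertible *)
  (hMid : Mid k l D eps \in unitmx) :
  Omega (psibar Lam D) =
    \sum_(i < n) \sum_(j < n) Bmx k l D eps i j *: Lam (xs D i) (ys D j).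
Proof.
have /andP [eps_gt0 _] := heps.
set c := mxvec (Cmx D); set b := c *m Omt k l D eps.
have c_eq : c = (1 - eps) *: (b *m Tmx k l D *m (Umx D)^T) + eps *: b.
  have -> : c = b *m (eps%:M + (1 - eps) *: (Tmx k l D *m (Umx D)^T)).
    by rewrite -mulmxA woodbury_mulmx ?mulmx1 ?gt_eqF.
  by rewrite mulmxDr mul_mx_scalar -scalemxAr mulmxA addrC.
rewrite /Bmx /vecr trmxK -/c -/b -featcomb_mxvec vec_mxK.
rewrite psibar_featcomb // -/c c_eq linearD !linearZ /=.
by rewrite -(Sigman_featcomb hlin hsym hLam hbeta hfold) hOmL.
Qed.
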